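(* Let $\rho\in\mathcal{L}_{0}$ be positive, let $\delta\in(0,\alpha]$ and let $\{w_{j}\}$ be a $(\rho,\delta)$-lattice on $\mathbb{D}$. For any $\xi\in\mathbb{D}$ and $k\in\mathbb{N}^{+}$, the set $$D_{k}(\xi)=\{z\in\mathbb{D}:|\xi-z|<2^{k}\delta\min(\rho(\xi),\rho(z))\}$$ contains at most $K$ points of the lattice $\{w_{j}\}$, where $K$ depends on $k$ but not on $\xi$.
   Context: $\mathbb{D}$ is the open unit disc. $C_0$ is the set of continuous $\rho$ on $\mathbb{D}$ with $\rho(z)\to0$ as $|z|\to1$. $\mathcal{L}$ is the set of real $\rho\in C_0$ with $\sup_{z\ne w}|\rho(z)-\rho(w)|/|z-w|<\infty$; $\mathcal{L}_0$ is the set of $\rho\in\mathcal{L}$ such that for every $\varepsilon>0$ there is a compact $E\subset\mathbb{D}$ with $|\rho(z)-\rho(w)|\le\varepsilon|z-w|$ for $z,w\in\mathbb{D}\setminus E$. $D^r(z)=D(z,r\rho(z))$ (Euclidean disc). There are constants $\alpha>0$, $s>0$ depending only on $\rho$ (with $\alpha$ fixed) such that for $0<r\le\alpha$ a $(\rho,r)$-lattice exists, where a $(\rho,r)$-lattice is a sequence $\{w_k\}\subset\mathbb{D}$ with $\mathbb{D}=\bigcup_kD^r(w_k)$, the discs $D^{sr}(w_k)$ pairwise disjoint, and $\{D^{2\alpha}(w_k)\}$ a covering of $\mathbb{D}$ of finite multiplicity. *)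

(* R : realType, the complex plane modelled as R * R
   with the Euclidean distance and the product topology. *)
From HB Require Import structures.
From mathcomp Require Import all_boot all_order all_algebra.
From mathcomp Require Import all_classical all_reals topology normedtype.
Set Implicit Arguments. Unset Strict Implicit. Unset Printing Implicit Defensive.
Import Order.TTheory GRing.Theory Num.Theory numFieldNormedType.Exports.
Local Open Scope ring_scope.
Local Open Scope classical_set_scope.

Section Defs.
Variable R : realType.
Local Notation P := (R * R)%type.

Definition edist (z w : P) : R :=
  Num.sqrt ((z.1 - w.1) ^+ 2 + (z.2 - w.2) ^+ 2).

Definition cmod (z : P) : R := edist z (0, 0).

Definition udisc : set P := [set z | cmod z < 1].

Definition edisc (c : P) (r : R) : set P := [set z | edist z c < r].

Definition inC0 (rho : P -> R) : Prop :=
  {within udisc, continuous rho} /\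
  (forall e : R, 0 < e -> exists r : R, r < 1 /\
     forall z : P, r < cmod z -> cmod z < 1 -> `|rho z| < e).

Definition inL (rho : P -> R) : Prop :=
  inC0 rho /\
  exists L : R, forall z w : P, udisc z -> udisc w -> z != w ->
    `|rho z - rho w| <= L * edist z w.

Definition inL0 (rho : P -> R) : Prop :=
  inL rho /\
  forall e : R, 0 < e -> exists E : set P, compact E /\ E `<=` udisc /\
    forall z w : P, (udisc `\` E) z -> (udisc `\` E) w ->
      `|rho z - rho w| <= e * edist z w.

Definition Dr (rho : P -> R) (r : R) (z : P) : set P := edisc z (r * rho z).

Definition is_lattice (rho : P -> R) (alpha s r : R) (w : nat -> P) : Prop :=
  (forall k, udisc (w k)) /\
  (forall z, udisc z -> exists k, Dr rho r (w k) z) /\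
  (forall k l, k <> l -> forall z, Dr rho (s * r) (w k) z -> ~ Dr rho (s * r) (w l) z) /\
  (forall z, udisc z -> exists k, Dr rho (2 * alpha) (w k) z) /\
  (exists N : nat, forall z, udisc z -> forall S : seq nat, uniq S ->
     (forall k, k \in S -> Dr rho (2 * alpha) (w k) z) -> (size S <= N)%N).

Definition Dk (rho : P -> R) (delta : R) (k : nat) (xi : P) : set P :=
  [set z | udisc z /\ edist xi z < 2 ^+ k * delta * Num.min (rho xi) (rho z)].

End Defs.

(* Lattice points are separated at scale rho: the disc D^{s delta}(w_i) contains w_i
   and is disjoint from D^{s delta}(w_j), so |w_i - w_j| >= s delta rho(w_j).  For the
   lattice points in D_k(xi), the Lipschitz bound on rho gives rho(xi) <= C rho(w_j)
   with C = 1 + L 2^k delta, so they form an (s delta rho(xi) / C)-separated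
   set inside the disc of radius 2^k delta rho(xi) about xi.  A grid of square cells of
   side half the separation holds at most one of them per cell, and the number of cells
   meeting that disc depends on k only, since rho(xi) cancels. *)

From Pilot Require Import Defs.
From HB Require Import structures.
From mathcomp Require Import all_boot all_order all_algebra.
From mathcomp Require Import all_classical all_reals topology normedtype.
From mathcomp Require Import ring lra.
Import Order.TTheory GRing.Theory Num.Theory numFieldNormedType.Exports.
Local Open Scope ring_scope.
Local Open Scope classical_set_scope.

Section LatticeCounting.
Local Set Implicit Arguments.
Local Unset Strict Implicit.
Variable R : realType.
Local Notation P := (R * R)%type.

Lemma uniq_size_le_grid (n : nat) (S : seq nat) (f : nat -> nat * nat) :
  uniq S -> {in S &, injective f} ->
  (forall j, j \in S -> ((f j).1 < n)%N /\ ((f j).2 < n)%N) -> (size S <= n * n)%N.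
Proof.
move=> uS f_inj f_bd.
have -> : (n * n)%N = size [seq (x, y) | x <- iota 0 n, y <- iota 0 n].
  by rewrite size_allpairs size_iota.
rewrite -(size_map f); apply: uniq_leq_size; first by rewrite map_inj_in_uniq.
move=> _ /mapP[j jS ->]; have [] := f_bd j jS.
by case: (f j) => a b /= a_lt b_lt; apply: allpairs_f; rewrite mem_iota.
Qed.

Lemma edist_ge0 (a b : P) : 0 <= Defs.edist a b.
Proof. exact: sqrtr_ge0. Qed.

Lemma edist_self (a : P) : Defs.edist a a = 0.
Proof. by rewrite /Defs.edist !subrr expr0n /= addr0 sqrtr0. Qed.

Lemma norm_sub1_le_edist (a b : P) : `|a.1 - b.1| <= Defs.edist a b.
Proof.
rewrite /Defs.edist -sqrtr_sqr ler_sqrt; last by rewrite addr_ge0 ?sqr_ge0.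
by rewrite lerDl sqr_ge0.
Qed.

Lemma norm_sub2_le_edist (a b : P) : `|a.2 - b.2| <= Defs.edist a b.
Proof.
rewrite /Defs.edist -sqrtr_sqr ler_sqrt; last by rewrite addr_ge0 ?sqr_ge0.
by rewrite lerDr sqr_ge0.
Qed.

Lemma edist_lt_of_coord (a b : P) (h : R) :
  `|a.1 - b.1| < h -> `|a.2 - b.2| < h -> Defs.edist a b < 2 * h.
Proof.
move=> lt1 lt2; have h_gt0 : 0 < h by apply: le_lt_trans lt1.
rewrite /Defs.edist -[2 * h]ger0_norm ?mulr_ge0 ?ltW // -sqrtr_sqr.
rewrite ltr_sqrt ?exprn_gt0 ?mulr_gt0 //.
by move: lt1 lt2; rewrite !ltr_norml => /andP[? ?] /andP[? ?]; nra.
Qed.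

Lemma truncn_div_eq_norm_lt (h x y : R) : 0 < h -> 0 <= x -> 0 <= y ->
  Num.truncn (x / h) = Num.truncn (y / h) -> `|x - y| < h.
Proof.
move=> h_gt0 x_ge0 y_ge0 same.
have := truncn_itv (divr_ge0 x_ge0 (ltW h_gt0)).
have := truncn_itv (divr_ge0 y_ge0 (ltW h_gt0)).
rewrite -same -natr1; set t := _%:R => /andP[y1 y2] /andP[x1 x2].
have -> : x - y = (x / h - y / h) * h by rewrite mulrBl !divfK // gt_eqF.
by rewrite normrM (gtr0_norm h_gt0) -[ltRHS]mul1r ltr_pM2r // ltr_norml; lra.
Qed.

Lemma truncn_div_le (h x T : R) : 0 < h -> x <= T * h ->
  (Num.truncn (x / h) <= Num.truncn T)%N.
Proof. by move=> h_gt0 x_le; apply: le_truncn; rewrite ler_pdivrMr. Qed.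

Definition cell (o : P) (h : R) (a : P) : nat * nat :=
  (Num.truncn ((a.1 - o.1) / h), Num.truncn ((a.2 - o.2) / h)).

Lemma cell_eq_edist_lt (o : P) (h : R) (a b : P) : 0 < h ->
  o.1 <= a.1 -> o.2 <= a.2 -> o.1 <= b.1 -> o.2 <= b.2 ->
  cell o h a = cell o h b -> Defs.edist a b < 2 * h.
Proof.
move=> h_gt0 a1 a2 b1 b2 [same1 same2].
have sub_ge0 (x y : R) : y <= x -> 0 <= x - y by rewrite subr_ge0.
have := truncn_div_eq_norm_lt h_gt0 (sub_ge0 _ _ a1) (sub_ge0 _ _ b1) same1.
have := truncn_div_eq_norm_lt h_gt0 (sub_ge0 _ _ a2) (sub_ge0 _ _ b2) same2.
by rewrite !opprB !addrA !subrK => lt2 lt1; apply: edist_lt_of_coord.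
Qed.

Lemma size_separated_in_disc (xi : P) (M d : R) (p : nat -> P) (S : seq nat) :
  0 < d -> uniq S -> (forall j, j \in S -> Defs.edist xi (p j) < M) ->
  {in S &, forall i j, i != j -> d <= Defs.edist (p i) (p j)} ->
  (size S <= (Num.truncn (4 * M / d)).+1 * (Num.truncn (4 * M / d)).+1)%N.
Proof.
move=> d_gt0 uS near sep; set h := d / 2; set o := (xi.1 - M, xi.2 - M).
have h_gt0 : 0 < h by rewrite divr_gt0.
have in_square j : j \in S ->
    [/\ o.1 <= (p j).1, o.2 <= (p j).2,
        (p j).1 - o.1 <= 4 * M / d * h & (p j).2 - o.2 <= 4 * M / d * h].
  move=> jS; have := near j jS.
  have := norm_sub1_le_edist xi (p j); have := norm_sub2_le_edist xi (p j).
  have -> : 4 * M / d * h = 2 * M by rewrite /h; field; rewrite gt_eqF.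
  by rewrite /= !ler_norml => /andP[? ?] /andP[? ?] ?; split; lra.
apply: (uniq_size_le_grid (f := cell o h \o p)) => //.
  move=> i j iS jS /= same; apply/eqP; apply: contraT => neq_ij.
  have [i1 i2 _ _] := in_square i iS; have [j1 j2 _ _] := in_square j jS.
  have := cell_eq_edist_lt h_gt0 i1 i2 j1 j2 same.
  by rewrite /h mulrC divfK ?pnatr_eq0 // ltNge sep.
move=> j jS; have [_ _ ? ?] := in_square j jS.
by rewrite /= !ltnS; split; apply: truncn_div_le.
Qed.

Section Lattice.
Variable rho : P -> R.
Hypothesis rho_gt0 : forall z, udisc z -> 0 < rho z.

Lemma lattice_separated (alpha s r : R) (w : nat -> P) (i j : nat) :
  0 < s -> 0 < r -> is_lattice rho alpha s r w -> i != j ->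
  s * r * rho (w j) <= Defs.edist (w i) (w j).
Proof.
move=> s_gt0 r_gt0 [w_in [_ [disj _]]] /eqP neq_ij; rewrite leNgt; apply/negP => near.
apply: (disj i j neq_ij (w i) _ near).
by rewrite /Dr /edisc /= edist_self !mulr_gt0 ?rho_gt0.
Qed.

Lemma inL_le_lipschitz : inL rho ->
  exists2 L, 0 <= L & forall z v, udisc z -> udisc v ->
    rho z <= rho v + L * Defs.edist z v.
Proof.
move=> [_ [L lip]]; exists `|L| => // z v zD vD.
have [->|neq_zv] := eqVneq z v; first by rewrite edist_self mulr0 addr0.
have := lip z v zD vD neq_zv; have := ler_norm (rho z - rho v).
have := ler_wpM2r (edist_ge0 z v) (ler_norm L); lra.
Qed.

Lemma Dk_edist_lt_rho_le (L delta : R) (k : nat) (xi z : P) : 0 <= L -> 0 <= delta ->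
  (forall z v, udisc z -> udisc v -> rho z <= rho v + L * Defs.edist z v) ->
  udisc xi -> Dk rho delta k xi z ->
  Defs.edist xi z < 2 ^+ k * delta * rho xi /\
  rho xi <= (1 + L * (2 ^+ k * delta)) * rho z.
Proof.
move=> L_ge0 delta_ge0 lip xiD [zD near]; set c := 2 ^+ k * delta.
have c_ge0 : 0 <= c by rewrite mulr_ge0 ?exprn_ge0.
split; first by apply: lt_le_trans near _; rewrite ler_wpM2l // ge_min lexx.
have : Defs.edist xi z <= c * rho z.
  by apply/ltW/(lt_le_trans near); rewrite ler_wpM2l // ge_min lexx orbT.
move/(ler_wpM2l L_ge0); have := lip xi z xiD zD; lra.
Qed.

End Lattice.

End LatticeCounting.

Theorem lemma5p5 (R : realType) (rho : R * R -> R) (alpha s : R)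
  (hrho : inL0 rho) (hpos : forall z, udisc z -> 0 < rho z)
  (halpha : 0 < alpha) (hs : 0 < s)
  (hex : forall r : R, 0 < r -> r <= alpha -> exists w, is_lattice rho alpha s r w)
  (delta : R) (hdelta : 0 < delta) (hdelta' : delta <= alpha)
  (w : nat -> R * R) (hw : is_lattice rho alpha s delta w) :
  forall k : nat, (0 < k)%N ->
    exists K : nat, forall xi : R * R, udisc xi ->
      forall S : seq nat, uniq S -> (forall j, j \in S -> Dk rho delta k xi (w j)) ->
        (size S <= K)%N.
Proof.
have [L L_ge0 lip] := inL_le_lipschitz hrho.1.
move=> k _; set c := 2 ^+ k * delta; set C := 1 + L * c.
have c_gt0 : 0 < c by rewrite mulr_gt0 ?exprn_gt0.
have C_gt0 : 0 < C by rewrite ltr_wpDr // mulr_ge0 // ltW.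
exists ((Num.truncn (4 * 2 ^+ k * C / s)).+1 * (Num.truncn (4 * 2 ^+ k * C / s)).+1)%N.
move=> xi xiD S uS inDk.
have xi_gt0 := hpos xi xiD.
have bounds j : j \in S -> _ := fun jS => Dk_edist_lt_rho_le L_ge0 (ltW hdelta) lip xiD (inDk j jS).
have -> : 4 * 2 ^+ k * C / s = 4 * (c * rho xi) / (s * delta * rho xi / C).
  by rewrite /c; field; rewrite !gt_eqF.
apply: (size_separated_in_disc (xi := xi) (p := w)) => //.
- by rewrite divr_gt0 ?mulr_gt0.
- by move=> j /bounds[].
- move=> i j iS jS neq_ij; apply: le_trans (lattice_separated hpos hs hdelta hw neq_ij).
  have [_ rho_le] := bounds j jS.
  by rewrite ler_pdivrMr // -!mulrA !ler_pM2l // mulrC.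
Qed.
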